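(* Let the timeline be $(\mathbb{Z},\leq)$, let $\Pi$ be a propositional DatalogMTL program, let $Q$ be a proposition and $t_B\le t_E$ integers, and let $B,E,Q'$ be propositions not occurring in $\Pi$ (nor in the datasets considered). Let $\Pi^Q=\Pi\cup\{Q'\leftarrow Q\,\mathcal{U}_{[0,\infty)}\,E,\ \bot\leftarrow B\wedge Q'\}$. Then for every dataset $\mathcal{D}^\dagger$ that is $\Pi$-consistent, the following are equivalent: (1) $(\mathcal{D}^\dagger,\Pi)\models Q@[t_B,t_E]$; (2) $\mathcal{D}^\dagger\cup\{B@\{t_B-1\},E@\{t_E+1\}\}$ is $\Pi^Q$-inconsistent.
   Context: A propositional DatalogMTL program uses only nullary predicates (propositions). $\mathfrak{M},t\models A\,\mathcal{U}_\varrho A'$ iff there is $t'$ with $t'-t\in\varrho$, $\mathfrak{M},t'\models A'$, and $\mathfrak{M},s\models A$ for all $s\in(t,t')$. A dataset is a finite set of facts $P@\iota$; it is $\Pi$-consistent if it has a model that is also a model of $\Pi$; $(\mathcal{D},\Pi)\models Q@\iota$ means every such model makes $Q$ true at every $t\in\iota$. *)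

From Stdlib Require Import ZArith List.
Import ListNotations.
Open Scope Z_scope.

Definition prop := nat.

(* Metric intervals rho subset of [0, +oo) with natural endpoints;
   [hi = None] means +oo.  Over the integer timeline, open/half-open
   endpoints reduce to closed ones, so we use closed intervals. *)
Record range := mkRange { r_lo : nat ; r_hi : option nat }.

Definition in_range (r : range) (d : Z) : Prop :=
  Z.of_nat (r_lo r) <= d /\
  match r_hi r with None => True | Some h => d <= Z.of_nat h end.

(* Intervals of the timeline Z (for facts); None = -oo / +oo. *)
Record tinterval := mkTI { ti_lo : option Z ; ti_hi : option Z }.

Definition in_tinterval (i : tinterval) (t : Z) : Prop :=
  match ti_lo i with None => True | Some l => l <= t end /\
  match ti_hi i with None => True | Some h => t <= h end.

Definition punctual (t : Z) : tinterval := mkTI (Some t) (Some t).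
Definition closed_int (a b : Z) : tinterval := mkTI (Some a) (Some b).

Inductive batom : Type :=
| BTop : batom
| BProp : prop -> batom
| BBoxMinus : range -> batom -> batom
| BBoxPlus : range -> batom -> batom
| BDiaMinus : range -> batom -> batom
| BDiaPlus : range -> batom -> batom
| BSince : range -> batom -> batom -> batom
| BUntil : range -> batom -> batom -> batom.

Inductive hatom : Type :=
| HProp : prop -> hatom
| HBoxMinus : range -> hatom -> hatom
| HBoxPlus : range -> hatom -> hatom.

Inductive head : Type :=
| HBot : head
| HAtom : hatom -> head.

Record rule := mkRule { r_head : head ; r_body : list batom }.
Definition program := list rule.

Record fact := mkFact { f_prop : prop ; f_int : tinterval }.
Definition dataset := list fact.

Definition interp := prop -> Z -> Prop.

Fixpoint sat_b (M : interp) (t : Z) (a : batom) : Prop :=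
  match a with
  | BTop => True
  | BProp p => M p t
  | BBoxMinus r A => forall s, in_range r (t - s) -> sat_b M s A
  | BBoxPlus r A => forall s, in_range r (s - t) -> sat_b M s A
  | BDiaMinus r A => exists s, in_range r (t - s) /\ sat_b M s A
  | BDiaPlus r A => exists s, in_range r (s - t) /\ sat_b M s A
  | BSince r A A' => exists t', in_range r (t - t') /\ sat_b M t' A' /\
        forall s, t' < s < t -> sat_b M s A
  | BUntil r A A' => exists t', in_range r (t' - t) /\ sat_b M t' A' /\
        forall s, t < s < t' -> sat_b M s A
  end.

Fixpoint sat_h (M : interp) (t : Z) (a : hatom) : Prop :=
  match a with
  | HProp p => M p t
  | HBoxMinus r A => forall s, in_range r (t - s) -> sat_h M s A
  | HBoxPlus r A => forall s, in_range r (s - t) -> sat_h M s A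
  end.

Definition sat_head (M : interp) (t : Z) (h : head) : Prop :=
  match h with
  | HBot => False
  | HAtom a => sat_h M t a
  end.

Definition model_rule (M : interp) (r : rule) : Prop :=
  forall t, (forall a, In a (r_body r) -> sat_b M t a) -> sat_head M t (r_head r).

Definition model_program (M : interp) (P : program) : Prop :=
  forall r, In r P -> model_rule M r.

Definition model_dataset (M : interp) (D : dataset) : Prop :=
  forall f, In f D -> forall t, in_tinterval (f_int f) t -> M (f_prop f) t.

Definition consistent (D : dataset) (P : program) : Prop :=
  exists M, model_dataset M D /\ model_program M P.

Definition entails (D : dataset) (P : program) (Q : prop) (i : tinterval) : Prop :=
  forall M, model_dataset M D -> model_program M P ->
    forall t, in_tinterval i t -> M Q t.

Fixpoint props_b (a : batom) : list prop :=
  match a with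
  | BTop => []
  | BProp p => [p]
  | BBoxMinus _ A | BBoxPlus _ A | BDiaMinus _ A | BDiaPlus _ A => props_b A
  | BSince _ A A' | BUntil _ A A' => props_b A ++ props_b A'
  end.

Fixpoint props_h (a : hatom) : list prop :=
  match a with
  | HProp p => [p]
  | HBoxMinus _ A | HBoxPlus _ A => props_h A
  end.

Definition props_head (h : head) : list prop :=
  match h with HBot => [] | HAtom a => props_h a end.

Definition props_rule (r : rule) : list prop :=
  props_head (r_head r) ++ flat_map props_b (r_body r).

Definition props_program (P : program) : list prop := flat_map props_rule P.

Definition props_dataset (D : dataset) : list prop := map f_prop D.

Definition range_0_inf : range := mkRange 0 None.

Definition PiQ (P : program) (Q B E Q' : prop) : program :=
  P ++ [ mkRule (HAtom (HProp Q')) [BUntil range_0_inf (BProp Q) (BProp E)] ;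
         mkRule HBot [BProp B ; BProp Q'] ].

(* If Q fails at some t in [tB, tE] in a model M of D and Pi, then re-interpret the fresh
   propositions: B only at tB - 1, E only at tE + 1, and Q' exactly where Q holds on the
   rest of (t, tE].  This still models D and Pi (which never mention B, E, Q'), satisfies
   the until rule, and falsifies B /\ Q' at tB - 1, so the extended dataset is
   Pi^Q-consistent.  Conversely, if Q holds on [tB, tE] in every model, the until rule
   fires at tB - 1 with witness tE + 1 and the rule bot <- B /\ Q' is violated there. *)

From Stdlib Require Import ZArith List Lia Classical.
Import ListNotations.
Open Scope Z_scope.

Definition agree_on (ps : list prop) (M1 M2 : interp) : Prop :=
  forall p, In p ps -> forall t, M1 p t <-> M2 p t.

Lemma agree_on_incl (ps ps' : list prop) (M1 M2 : interp) :
  incl ps ps' -> agree_on ps' M1 M2 -> agree_on ps M1 M2.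
Proof. intros Hincl Hag p Hp; apply Hag, Hincl, Hp. Qed.

Lemma sat_b_agree (M1 M2 : interp) (a : batom) :
  agree_on (props_b a) M1 M2 -> forall t, sat_b M1 t a <-> sat_b M2 t a.
Proof.
  induction a as [| p | r a IH | r a IH | r a IH | r a IH
                 | r a1 IH1 a2 IH2 | r a1 IH1 a2 IH2]; simpl; intros Hag t.
  - tauto.
  - apply Hag; left; reflexivity.
  - split; intros H s Hs; apply (IH Hag s), H, Hs.
  - split; intros H s Hs; apply (IH Hag s), H, Hs.
  - split; intros [s [Hs H]]; exists s; split; try apply (IH Hag s); assumption.
  - split; intros [s [Hs H]]; exists s; split; try apply (IH Hag s); assumption.
  - assert (Hag1 := agree_on_incl _ _ _ _ (incl_appl _ (incl_refl _)) Hag).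
    assert (Hag2 := agree_on_incl _ _ _ _ (incl_appr _ (incl_refl _)) Hag).
    split; intros [t' (Hr & H' & H)]; exists t'; (split; [exact Hr | split]);
      solve [apply (IH2 Hag2 t'), H' | intros s Hs; apply (IH1 Hag1 s), H, Hs].
  - assert (Hag1 := agree_on_incl _ _ _ _ (incl_appl _ (incl_refl _)) Hag).
    assert (Hag2 := agree_on_incl _ _ _ _ (incl_appr _ (incl_refl _)) Hag).
    split; intros [t' (Hr & H' & H)]; exists t'; (split; [exact Hr | split]);
      solve [apply (IH2 Hag2 t'), H' | intros s Hs; apply (IH1 Hag1 s), H, Hs].
Qed.

Lemma sat_h_agree (M1 M2 : interp) (a : hatom) :
  agree_on (props_h a) M1 M2 -> forall t, sat_h M1 t a <-> sat_h M2 t a.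
Proof.
  induction a as [p | r a IH | r a IH]; simpl; intros Hag t.
  - apply Hag; left; reflexivity.
  - split; intros H s Hs; apply (IH Hag s), H, Hs.
  - split; intros H s Hs; apply (IH Hag s), H, Hs.
Qed.

Lemma model_rule_agree (M1 M2 : interp) (r : rule) :
  agree_on (props_rule r) M1 M2 -> model_rule M1 r -> model_rule M2 r.
Proof.
  unfold props_rule; intros Hag Hr t Hbody.
  assert (Hbody1 : forall a, In a (r_body r) -> sat_b M1 t a).
  { intros a Ha; apply (sat_b_agree M1 M2 a); [| apply Hbody, Ha].
    apply (agree_on_incl _ _ _ _ (incl_appr _ (incl_refl _))) in Hag.
    intros p Hp; apply Hag, in_flat_map; eauto. }
  specialize (Hr t Hbody1); destruct (r_head r) as [| h]; simpl in *; [exact Hr |].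
  apply (sat_h_agree M1 M2 h); [| exact Hr].
  exact (agree_on_incl _ _ _ _ (incl_appl _ (incl_refl _)) Hag).
Qed.

Lemma model_program_agree (M1 M2 : interp) (P : program) :
  agree_on (props_program P) M1 M2 -> model_program M1 P -> model_program M2 P.
Proof.
  intros Hag HP r Hr; apply (model_rule_agree M1); [| apply HP, Hr].
  intros p Hp; apply Hag, in_flat_map; eauto.
Qed.

Lemma model_dataset_agree (M1 M2 : interp) (D : dataset) :
  agree_on (props_dataset D) M1 M2 -> model_dataset M1 D -> model_dataset M2 D.
Proof.
  intros Hag HD f Hf t Ht; apply Hag; [apply in_map, Hf | apply (HD f Hf t Ht)].
Qed.

Definition update (M : interp) (p : prop) (X : Z -> Prop) : interp :=
  fun q => if Nat.eqb q p then X else M q.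

Lemma update_eq (M : interp) (p : prop) (X : Z -> Prop) : update M p X p = X.
Proof. unfold update; rewrite Nat.eqb_refl; reflexivity. Qed.

Lemma update_neq (M : interp) (p q : prop) (X : Z -> Prop) :
  q <> p -> update M p X q = M q.
Proof. intros Hqp; unfold update; rewrite (proj2 (Nat.eqb_neq q p) Hqp); reflexivity. Qed.

Lemma agree_on_update (ps : list prop) (M : interp) (p : prop) (X : Z -> Prop) :
  ~ In p ps -> agree_on ps M (update M p X).
Proof.
  intros Hp q Hq t; rewrite update_neq; [tauto |].
  intros ->; exact (Hp Hq).
Qed.

Lemma model_program_update (M : interp) (P : program) (p : prop) (X : Z -> Prop) :
  ~ In p (props_program P) -> model_program M P -> model_program (update M p X) P.
Proof. intros Hp; apply model_program_agree, agree_on_update, Hp. Qed.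

Lemma model_dataset_update (M : interp) (D : dataset) (p : prop) (X : Z -> Prop) :
  ~ In p (props_dataset D) -> model_dataset M D -> model_dataset (update M p X) D.
Proof. intros Hp; apply model_dataset_agree, agree_on_update, Hp. Qed.

Lemma model_dataset_nil (M : interp) : model_dataset M [].
Proof. intros f []. Qed.

Lemma model_dataset_app (M : interp) (D1 D2 : dataset) :
  model_dataset M (D1 ++ D2) <-> model_dataset M D1 /\ model_dataset M D2.
Proof.
  split.
  - intros HD; split; intros f Hf; apply HD, in_or_app; auto.
  - intros [HD1 HD2] f Hf; apply in_app_or in Hf as [Hf | Hf]; auto.
Qed.

Lemma model_dataset_punctual (M : interp) (p : prop) (t : Z) (D : dataset) :
  model_dataset M (mkFact p (punctual t) :: D) <-> M p t /\ model_dataset M D.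
Proof.
  split.
  - intros HD; split.
    + apply (HD (mkFact p (punctual t))); [left; reflexivity | unfold in_tinterval; simpl; lia].
    + intros f Hf; apply HD; right; exact Hf.
  - intros [Hp HD] f [<- | Hf] s Hs; [unfold in_tinterval in Hs; simpl in Hs; replace s with t by lia |]; auto.
Qed.

Lemma model_program_nil (M : interp) : model_program M [].
Proof. intros r []. Qed.

Lemma model_program_app (M : interp) (P1 P2 : program) :
  model_program M (P1 ++ P2) <-> model_program M P1 /\ model_program M P2.
Proof.
  split.
  - intros HP; split; intros r Hr; apply HP, in_or_app; auto.
  - intros [HP1 HP2] r Hr; apply in_app_or in Hr as [Hr | Hr]; auto.
Qed.

Lemma model_program_cons (M : interp) (r : rule) (P : program) :
  model_program M (r :: P) <-> model_rule M r /\ model_program M P.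
Proof.
  split.
  - intros HP; split; [apply HP; left; reflexivity | intros r' Hr'; apply HP; right; exact Hr'].
  - intros [Hr HP] r' [<- | Hr']; auto.
Qed.

Definition until_rule (Q E Q' : prop) : rule :=
  mkRule (HAtom (HProp Q')) [BUntil range_0_inf (BProp Q) (BProp E)].

Definition guard_rule (B Q' : prop) : rule := mkRule HBot [BProp B; BProp Q'].

Lemma PiQ_eq (P : program) (Q B E Q' : prop) :
  PiQ P Q B E Q' = P ++ [until_rule Q E Q'; guard_rule B Q'].
Proof. reflexivity. Qed.

Lemma model_until_rule (M : interp) (Q E Q' : prop) :
  model_rule M (until_rule Q E Q') <->
  forall t t', t <= t' -> M E t' -> (forall s, t < s < t' -> M Q s) -> M Q' t.
Proof.
  unfold model_rule; simpl; split.
  - intros Hr t t' Htt' HE HQ; apply Hr.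
    intros a [<- | []]; exists t'; unfold in_range; simpl; repeat split; auto; lia.
  - intros H t Hbody; destruct (Hbody _ (or_introl eq_refl)) as [t' ([Htt' _] & HE & HQ)].
    simpl in Htt'; apply (H t t'); auto; lia.
Qed.

Lemma model_guard_rule (M : interp) (B Q' : prop) :
  model_rule M (guard_rule B Q') <-> forall t, M B t -> M Q' t -> False.
Proof.
  unfold model_rule; simpl; split.
  - intros Hr t HB HQ'; apply (Hr t); intros a [<- | [<- | []]]; assumption.
  - intros H t Hbody; apply (H t); [apply (Hbody (BProp B)) | apply (Hbody (BProp Q'))]; auto.
Qed.

Section Countermodel.

Variables (Q B E Q' : prop) (tB tE : Z) (M : interp).
Hypotheses (nBE : B <> E) (nBQ' : B <> Q') (nEQ' : E <> Q')
           (nQB : Q <> B) (nQE : Q <> E) (nQQ' : Q <> Q').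

Definition query_countermodel : interp :=
  update (update (update M B (fun t => t = tB - 1)) E (fun t => t = tE + 1))
         Q' (fun t => forall s, t < s <= tE -> M Q s).

Lemma query_countermodel_Q : query_countermodel Q = M Q.
Proof. unfold query_countermodel; rewrite !update_neq; auto. Qed.

Lemma query_countermodel_B : query_countermodel B = fun t => t = tB - 1.
Proof. unfold query_countermodel; rewrite update_neq, update_neq, update_eq; auto. Qed.

Lemma query_countermodel_E : query_countermodel E = fun t => t = tE + 1.
Proof. unfold query_countermodel; rewrite update_neq, update_eq; auto. Qed.

Lemma query_countermodel_Q' :
  query_countermodel Q' = fun t => forall s, t < s <= tE -> M Q s.
Proof. unfold query_countermodel; rewrite update_eq; reflexivity. Qed.

Lemma model_program_query_countermodel (P : program) :
  ~ In B (props_program P) -> ~ In E (props_program P) -> ~ In Q' (props_program P) ->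
  model_program M P -> model_program query_countermodel P.
Proof. intros; repeat apply model_program_update; assumption. Qed.

Lemma model_dataset_query_countermodel (D : dataset) :
  ~ In B (props_dataset D) -> ~ In E (props_dataset D) -> ~ In Q' (props_dataset D) ->
  model_dataset M D -> model_dataset query_countermodel D.
Proof. intros; repeat apply model_dataset_update; assumption. Qed.

Lemma query_countermodel_until_rule : model_rule query_countermodel (until_rule Q E Q').
Proof.
  apply model_until_rule; rewrite query_countermodel_E, query_countermodel_Q',
    query_countermodel_Q.
  intros t t' _ -> HQ s Hs; apply HQ; lia.
Qed.

Lemma query_countermodel_guard_rule (t : Z) :
  tB <= t <= tE -> ~ M Q t -> model_rule query_countermodel (guard_rule B Q').
Proof.
  intros Ht HnQ; apply model_guard_rule; rewrite query_countermodel_B, query_countermodel_Q'.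
  intros s -> HQ; apply HnQ, HQ; lia.
Qed.

End Countermodel.

Theorem mainTheorem4 (P : program) (Q B E Q' : prop) (tB tE : Z) :
  tB <= tE ->
  ~ In B (props_program P) -> ~ In E (props_program P) -> ~ In Q' (props_program P) ->
  B <> E -> B <> Q' -> E <> Q' -> Q <> B -> Q <> E -> Q <> Q' ->
  forall D : dataset,
    ~ In B (props_dataset D) -> ~ In E (props_dataset D) -> ~ In Q' (props_dataset D) ->
    consistent D P ->
    (entails D P Q (closed_int tB tE) <->
     ~ consistent (D ++ [mkFact B (punctual (tB - 1)); mkFact E (punctual (tE + 1))])
                  (PiQ P Q B E Q')).
Proof.
  intros Hle HPB HPE HPQ' nBE nBQ' nEQ' nQB nQE nQQ' D HDB HDE HDQ' _.
  rewrite PiQ_eq; split.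
  - intros Hent [M [HD HP]].
    rewrite model_dataset_app, !model_dataset_punctual in HD.
    destruct HD as (HD & HB & HE & _).
    rewrite model_program_app, !model_program_cons, model_until_rule, model_guard_rule in HP.
    destruct HP as (HP & Huntil & Hguard & _).
    apply (Hguard (tB - 1) HB), (Huntil (tB - 1) (tE + 1)); [lia | exact HE |].
    intros s Hs; apply (Hent M HD HP); unfold in_tinterval; simpl; lia.
  - intros Hinc M HD HP t Ht; apply NNPP; intros HnQ; apply Hinc.
    unfold in_tinterval in Ht; simpl in Ht.
    exists (query_countermodel Q B E Q' tB tE M); split.
    + rewrite model_dataset_app, !model_dataset_punctual,
        query_countermodel_B, query_countermodel_E by assumption.
      repeat split; auto using model_dataset_query_countermodel, model_dataset_nil.
    + rewrite model_program_app, !model_program_cons.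
      repeat split; eauto using model_program_query_countermodel, model_program_nil,
        query_countermodel_until_rule, query_countermodel_guard_rule.
Qed.
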